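(* The set of flat formulas of $\mathbf{PT}$ is closed under flat substitutions: if $\phi$ is a flat formula of $\mathbf{PT}$ and $\sigma$ is a flat substitution of $\mathbf{PT}$, then $\sigma(\phi)$ is flat.
   Context: Fix a countably infinite set Prop of propositional variables. A valuation is a function $v:\mathrm{Prop}\to\{0,1\}$; a team is a set of valuations. Formulas of $\mathbf{PT}$: $\phi::=p\mid\bot\mid\top\mid\,=\!(\phi_1,\dots,\phi_n,\phi)\mid\neg\phi\mid\phi\wedge\phi\mid\phi\otimes\phi\mid\phi\vee\phi\mid\phi\to\phi$. Satisfaction on a team $X$: $X\models p$ iff $v(p)=1$ for all $v\in X$; $X\models\bot$ iff $X=\emptyset$; $X\models\top$ always; $\wedge$ is conjunction of conditions; $X\models\phi\otimes\psi$ iff $X=Y\cup Z$ with $Y\models\phi$, $Z\models\psi$; $X\models\phi\vee\psi$ iff $X\models\phi$ or $X\models\psi$; $X\models\phi\to\psi$ iff every $Y\subseteq X$ with $Y\models\phi$ satisfies $\psi$; $X\models\neg\phi$ iff $\{v\}\not\models\phi$ for all $v\in X$; $X\models\,=\!(\phi_1,\dots,\phi_n,\psi)$ iff $X\models\bigwedge_i(\phi_i\vee(\phi_i\to\bot))\to(\psi\vee(\psi\to\bot))$. $\phi$ is flat if for all teams $X$: $X\models\phi$ iff $\{v\}\models\phi$ for all $v\in X$. A substitution is a map on formulas commuting with all connectives and atoms; it is flat if $\sigma(p)$ is flat for every $p\in\mathrm{Prop}$. *)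

From Stdlib Require Import List.
Import ListNotations.

(* Prop = nat (a countably infinite set of propositional variables). *)
Definition valuation := nat -> bool.
Definition team := valuation -> Prop.

Definition subteam (Y X : team) : Prop := forall v, Y v -> X v.
Definition singleton (v : valuation) : team := fun w => w = v.

Inductive form : Type :=
| Var : nat -> form
| Bot : form
| Top : form
| Dep : list form -> form -> form
| Neg : form -> form
| And : form -> form -> form
| Tensor : form -> form -> form
| Or : form -> form -> form          (* intuitionistic disjunction *)
| Imp : form -> form -> form.

Fixpoint sat (f : form) (X : team) {struct f} : Prop :=
  match f with
  | Var p => forall v, X v -> v p = true
  | Bot => forall v, ~ X v
  | Top => True
  | Dep l g =>
      (* X |= /\_i (phi_i \/ (phi_i -> bot)) -> (g \/ (g -> bot)) *)
      forall Y, subteam Y X ->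
        (fix all_dec (l : list form) : Prop :=
           match l with
           | [] => True
           | h :: l' =>
               (sat h Y \/ (forall Z, subteam Z Y -> sat h Z -> forall v, ~ Z v))
               /\ all_dec l'
           end) l ->
        (sat g Y \/ (forall Z, subteam Z Y -> sat g Z -> forall v, ~ Z v))
  | Neg g => forall v, X v -> ~ sat g (singleton v)
  | And g h => sat g X /\ sat h X
  | Tensor g h => exists Y Z : team,
      (forall v, X v <-> (Y v \/ Z v)) /\ sat g Y /\ sat h Z
  | Or g h => sat g X \/ sat h X
  | Imp g h => forall Y, subteam Y X -> sat g Y -> sat h Y
  end.

Definition flat (f : form) : Prop :=
  forall X : team, sat f X <-> (forall v, X v -> sat f (singleton v)).

Fixpoint subst (s : nat -> form) (f : form) {struct f} : form :=
  match f with
  | Var p => s p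
  | Bot => Bot
  | Top => Top
  | Dep l g => Dep (map (subst s) l) (subst s g)
  | Neg g => Neg (subst s g)
  | And g h => And (subst s g) (subst s h)
  | Tensor g h => Tensor (subst s g) (subst s h)
  | Or g h => Or (subst s g) (subst s h)
  | Imp g h => Imp (subst s g) (subst s h)
  end.

Definition flat_subst (s : nat -> form) : Prop := forall p, flat (s p).

From Stdlib Require Import List Setoid ClassicalEpsilon
  FunctionalExtensionality PropExtensionality.
Import ListNotations.

(* A flat substitution [s] induces a map [g] on valuations: [g v] makes [p]
   true exactly when the singleton team of [v] satisfies [s p].  By induction
   on formulas, [X] satisfies [subst s phi] iff the image team [g[X]]
   satisfies [phi]; the operators quantifying over subteams are handled by
   noting that every subteam of [g[X]] is the image of a subteam of [X].
   Flatness of [phi] then transfers along [g], since [g] maps singletons to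
   singletons. *)

Section FormNestedInd.

Variable P : form -> Prop.
Hypothesis HVar : forall p, P (Var p).
Hypothesis HBot : P Bot.
Hypothesis HTop : P Top.
Hypothesis HDep : forall l g, Forall P l -> P g -> P (Dep l g).
Hypothesis HNeg : forall g, P g -> P (Neg g).
Hypothesis HAnd : forall g h, P g -> P h -> P (And g h).
Hypothesis HTensor : forall g h, P g -> P h -> P (Tensor g h).
Hypothesis HOr : forall g h, P g -> P h -> P (Or g h).
Hypothesis HImp : forall g h, P g -> P h -> P (Imp g h).

Fixpoint form_nested_ind (f : form) : P f :=
  match f with
  | Var p => HVar p
  | Bot => HBot
  | Top => HTop
  | Dep l g => HDep l g
      ((fix all_P (l : list form) : Forall P l :=
          match l with
          | [] => Forall_nil _
          | h :: t => Forall_cons h (form_nested_ind h) (all_P t)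
          end) l)
      (form_nested_ind g)
  | Neg g => HNeg g (form_nested_ind g)
  | And g h => HAnd g h (form_nested_ind g) (form_nested_ind h)
  | Tensor g h => HTensor g h (form_nested_ind g) (form_nested_ind h)
  | Or g h => HOr g h (form_nested_ind g) (form_nested_ind h)
  | Imp g h => HImp g h (form_nested_ind g) (form_nested_ind h)
  end.

End FormNestedInd.

Lemma Forall_iff {A : Type} (P Q : A -> Prop) (l : list A) :
  Forall (fun x => P x <-> Q x) l -> (Forall P l <-> Forall Q l).
Proof.
  induction 1 as [|x l Hx _ IH]; [split; constructor|].
  rewrite !Forall_cons_iff, Hx, IH; tauto.
Qed.

Lemma team_ext (X Y : team) : (forall v, X v <-> Y v) -> X = Y.
Proof.
  intro H; apply functional_extensionality; intro v.
  apply propositional_extensionality, H.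
Qed.

(* The team semantics of [f \/ (f -> bot)]. *)
Definition decided (f : form) (Y : team) : Prop :=
  sat f Y \/ (forall Z, subteam Z Y -> sat f Z -> forall v, ~ Z v).

Lemma sat_Dep l g X :
  sat (Dep l g) X <->
  (forall Y, subteam Y X -> Forall (fun h => decided h Y) l -> decided g Y).
Proof.
  simpl; split; intros H Y HY Hl; apply H; try exact HY; clear H HY.
  - induction Hl; simpl; auto.
  - induction l as [|h l IH]; constructor; destruct Hl; auto.
Qed.

Section Image.

Variable g : valuation -> valuation.

Definition image (X : team) : team := fun w => exists v, X v /\ g v = w.

Definition restrict (X Y : team) : team := fun v => X v /\ Y (g v).

Lemma image_mono X Y : subteam Y X -> subteam (image Y) (image X).
Proof. intros H w [v [Yv E]]; exists v; auto. Qed.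

Lemma restrict_subteam X Y : subteam (restrict X Y) X.
Proof. intros v [Xv _]; exact Xv. Qed.

Lemma image_restrict X Y : subteam Y (image X) -> image (restrict X Y) = Y.
Proof.
  intro H; apply team_ext; intro w; split.
  - intros [v [[_ Yv] <-]]; exact Yv.
  - intro Yw; destruct (H w Yw) as [v [Xv <-]]; exists v; repeat split; auto.
Qed.

Lemma image_singleton v : image (singleton v) = singleton (g v).
Proof.
  apply team_ext; intro w; unfold singleton; split.
  - intros [u [-> <-]]; reflexivity.
  - intros ->; exists v; auto.
Qed.

Lemma forall_image (P : valuation -> Prop) X :
  (forall v, X v -> P (g v)) <-> (forall w, image X w -> P w).
Proof.
  split.
  - intros H w [v [Xv <-]]; auto.
  - intros H v Xv; apply H; exists v; auto.
Qed.

Lemma empty_image X : (forall v, ~ X v) <-> (forall w, ~ image X w).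
Proof. exact (forall_image (fun _ => False) X). Qed.

Lemma forall_subteam_image (A B : team -> Prop) X :
  (forall Y, subteam Y X -> A (image Y) -> B (image Y)) <->
  (forall Y, subteam Y (image X) -> A Y -> B Y).
Proof.
  split.
  - intros H Y HY AY; rewrite <- (image_restrict X Y HY) in AY |- *.
    apply H; [apply restrict_subteam | exact AY].
  - intros H Y HY; apply H, image_mono, HY.
Qed.

Lemma exists_split_image (A B : team -> Prop) X :
  (exists Y Z, (forall v, X v <-> Y v \/ Z v) /\ A (image Y) /\ B (image Z)) <->
  (exists Y Z, (forall w, image X w <-> Y w \/ Z w) /\ A Y /\ B Z).
Proof.
  split.
  - intros [Y [Z [E [AY BZ]]]]; exists (image Y), (image Z); repeat split; auto.
    + intros [v [Xv <-]]; apply E in Xv as [Yv|Zv]; [left|right]; exists v; auto.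
    + intros [[v [Yv <-]]|[v [Zv <-]]]; exists v; split; auto; apply E; auto.
  - intros [Y [Z [E [AY BZ]]]].
    assert (HY : subteam Y (image X)) by (intros w Yw; apply E; auto).
    assert (HZ : subteam Z (image X)) by (intros w Zw; apply E; auto).
    exists (restrict X Y), (restrict X Z).
    rewrite (image_restrict X Y HY), (image_restrict X Z HZ).
    repeat split; auto.
    + intro Xv; assert (Hv : image X (g v)) by (exists v; auto).
      apply E in Hv as [|]; [left|right]; split; auto.
    + intros [[Xv _]|[Xv _]]; exact Xv.
Qed.

End Image.

Section FlatSubstitution.

Variable s : nat -> form.
Hypothesis Hs : flat_subst s.

Definition subst_valuation (v : valuation) : valuation :=
  fun p => if excluded_middle_informative (sat (s p) (singleton v))
           then true else false.

Lemma subst_valuation_true v p :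
  subst_valuation v p = true <-> sat (s p) (singleton v).
Proof.
  unfold subst_valuation.
  destruct (excluded_middle_informative _); split; auto; discriminate.
Qed.

Lemma decided_subst_image h :
  (forall X, sat (subst s h) X <-> sat h (image subst_valuation X)) ->
  forall Y, decided (subst s h) Y <-> decided h (image subst_valuation Y).
Proof.
  intros Hh Y; unfold decided.
  rewrite Hh, <- forall_subteam_image.
  setoid_rewrite Hh; setoid_rewrite <- empty_image; reflexivity.
Qed.

Lemma sat_subst_image f X :
  sat (subst s f) X <-> sat f (image subst_valuation X).
Proof.
  revert X; induction f as [p| | |l g Hl Hg|g Hg|g h Hg Hh|g h Hg Hh|g h Hg Hh
    |g h Hg Hh] using form_nested_ind; intro X.
  - simpl; rewrite (Hs p X), <- forall_image.
    setoid_rewrite subst_valuation_true; reflexivity.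
  - apply empty_image.
  - reflexivity.
  - assert (HF : forall Y, Forall (fun h => decided h Y) (map (subst s) l) <->
                 Forall (fun h => decided h (image subst_valuation Y)) l).
    { intro Y; rewrite Forall_map; apply Forall_iff.
      eapply Forall_impl; [|exact Hl]; intros h Hh; apply decided_subst_image, Hh. }
    simpl subst; rewrite !sat_Dep.
    setoid_rewrite HF; setoid_rewrite (decided_subst_image g Hg).
    exact (forall_subteam_image _ (fun Y => Forall (fun h => decided h Y) l)
             (decided g) X).
  - simpl; rewrite <- forall_image.
    setoid_rewrite Hg; setoid_rewrite image_singleton; reflexivity.
  - simpl; rewrite Hg, Hh; reflexivity.
  - simpl; setoid_rewrite Hg; setoid_rewrite Hh; apply exists_split_image.
  - simpl; rewrite Hg, Hh; reflexivity.
  - simpl; setoid_rewrite Hg; setoid_rewrite Hh; apply forall_subteam_image.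
Qed.

End FlatSubstitution.

Theorem lemma3p6 (s : nat -> form) (phi : form) :
  flat_subst s -> flat phi -> flat (subst s phi).
Proof.
  intros Hs Hphi X.
  rewrite (sat_subst_image s Hs), (Hphi _),
    <- (forall_image _ (fun w => sat phi (singleton w))).
  setoid_rewrite (sat_subst_image s Hs); setoid_rewrite image_singleton.
  reflexivity.
Qed.
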